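(* Let $\mathcal{A}=\{0,1\}$ and $\mathcal{F}=\{(0,0,0),(1,1,1)\}$, where $(a,b,c)$ denotes the $2$-block $u$ with $u_\epsilon=a$, $u_0=b$, $u_1=c$. Then $\mathsf{X}_{\mathcal{F}}$ is strongly irreducible with complete prefix code $P=\{0,10,11\}$, and it is not uniformly block gluing.
   Context: $\Sigma=\{0,1\}$. $\Sigma^*$ is the set of finite words, with $\epsilon$ the empty word. $\Sigma^k$ is the set of words of length $k$, and $\Sigma_n=\bigcup_{0\le k\le n}\Sigma^k$. A tree is $t:\Sigma^*\to\mathcal{A}$, and we write $t_x=t(x)$. A pattern $u$ is a map on a finite prefix-closed support $S(u)$. $\mathsf{X}_{\mathcal{F}}$ is the set of trees in which no pattern of $\mathcal{F}$ occurs at any node; here it is the set of trees $t$ such that for no $x$ do $t_x=t_{x0}=t_{x1}$ hold. A pattern is accepted by $X$ if it occurs in some $t\in X$. $B_n(X)=\{t|_{\Sigma_{n-1}}:t\in X\}$. For $w\in\Sigma^*$, $t|_{wS(v)}=v$ means $t_{wy}=v_y$ for all $y\in S(v)$. A leaf of $u$ is $w\in S(u)$ with $w0,w1\notin S(u)$. A complete prefix code (CPC) is a finite set $P\subseteq\Sigma^*\setminus\{\epsilon\}$ such that no word of $P$ is a prefix of another, and every $x$ with $|x|\ge\max_{y\in P}|y|$ has a prefix in $P$. Patterns $u,v$ are connected through $P$ if there is $t\in X$ with $t|_{S(u)}=u$ and $t|_{wxS(v)}=v$ for every leaf $w$ of $u$ and every $x\in P$. $X$ is strongly irreducible with CPC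 $P$ if any two patterns accepted by $X$ are connected through $P$. $X$ is uniformly block gluing if there is $k\ge1$ such that for every $n\ge1$ any $u,v\in B_n(X)$ are connected through $\Sigma^k$. *)

(* Words over Sigma={0,1} are seq bool with 0 = false, 1 = true. *)
From mathcomp Require Import all_boot.
Set Implicit Arguments. Unset Strict Implicit. Unset Printing Implicit Defensive.

Definition word := seq bool.
Definition tree := word -> bool.
Definition tshift := tree -> Prop.

(* A pattern: a finite support S (listed) together with values u (only
   the values on S matter). *)
Definition prefix_closed (S : seq word) : Prop :=
  forall x, x \in S -> forall p, prefix p x -> p \in S.

Definition XF : tshift := fun t =>
  forall x : word, ~ (t x = t (rcons x false) /\ t x = t (rcons x true)).

Definition occurs_at (t : tree) (w : word) (S : seq word) (u : word -> bool) : Prop :=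
  forall y, y \in S -> t (w ++ y) = u y.

Definition accepted (X : tshift) (S : seq word) (u : word -> bool) : Prop :=
  prefix_closed S /\ exists t, X t /\ exists w, occurs_at t w S u.

Definition leaf (S : seq word) (w : word) : Prop :=
  w \in S /\ rcons w false \notin S /\ rcons w true \notin S.

Definition connected (X : tshift) (Su : seq word) (u : word -> bool)
  (Sv : seq word) (v : word -> bool) (P : seq word) : Prop :=
  exists t, X t /\ occurs_at t [::] Su u /\
    forall w, leaf Su w -> forall x, x \in P -> occurs_at t (w ++ x) Sv v.

Definition is_CPC (P : seq word) : Prop :=
  [::] \notin P /\
  (forall x y, x \in P -> y \in P -> x != y -> ~~ prefix x y) /\
  (forall x : word, \max_(y <- P) size y <= size x ->
     exists2 p, p \in P & prefix p x).

Definition strongly_irreducible (X : tshift) (P : seq word) : Prop :=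
  is_CPC P /\
  forall Su u Sv v, accepted X Su u -> accepted X Sv v ->
    connected X Su u Sv v P.

Fixpoint words (k : nat) : seq word :=
  if k is k'.+1 then [seq b :: w | b <- [:: false; true], w <- words k']
  else [:: [::]].
Definition Sigma_upto (n : nat) : seq word := flatten [seq words k | k <- iota 0 n.+1].

Definition in_B (X : tshift) (n : nat) (u : word -> bool) : Prop :=
  exists t, X t /\ occurs_at t [::] (Sigma_upto n.-1) u.

Definition uniformly_block_gluing (X : tshift) : Prop :=
  exists k, 1 <= k /\ forall n, 1 <= n -> forall u v,
    in_B X n u -> in_B X n v ->
    connected X (Sigma_upto n.-1) u (Sigma_upto n.-1) v (words k).

(* Strong irreducibility: below each leaf w of the first pattern put the
   node w1 with the value opposite to the one at w0; the second pattern is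
   then copied below w0, w10 and w11, and since the two children of w differ
   no forbidden block is created at the seam.
   No uniform block gluing: if all nodes at depth k carry the same value, the
   rule "equal children force the opposite value at the parent" determines the
   root, so a one-node pattern at the root cannot be glued to a constant
   pattern at depth k. *)
From mathcomp Require Import all_boot.
Set Implicit Arguments. Unset Strict Implicit. Unset Printing Implicit Defensive.

Lemma XF_shift (t : tree) (w : word) : XF t -> XF (fun z => t (w ++ z)).
Proof. by move=> Xt z; rewrite -!rcons_cat; apply: Xt. Qed.

Lemma XF_parent (t : tree) (z : word) (b : bool) : XF t ->
  t (rcons z false) = b -> t (rcons z true) = b -> t z = ~~ b.
Proof.
move=> Xt h0 h1; have := Xt z; rewrite h0 h1 {h0 h1}.
by case: (t z); case: b => // /(_ (conj erefl erefl)).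
Qed.

Lemma prefix_comparable (a b z : word) :
  prefix a z -> prefix b z -> size a <= size b -> prefix a b.
Proof. by rewrite !prefixE => /eqP ha /eqP hb hs; rewrite -hb take_takel // ha. Qed.

Lemma prefix_rcons_small (w z : word) (c : bool) :
  size w <= size z -> prefix w (rcons z c) = prefix w z.
Proof. by move=> hs; rewrite !prefixE -cats1 takel_cat. Qed.

Section Graft.

Variable S : seq word.
Hypothesis S_closed : prefix_closed S.

Definition leafb (w : word) : bool :=
  [&& w \in S, rcons w false \notin S & rcons w true \notin S].

(* The leaf of [S] strictly above [z]; it is unique when [S] is prefix-closed. *)
Definition leaf_above (z : word) : option word :=
  ohead [seq w <- S | [&& leafb w, prefix w z & size w < size z]].

Lemma leaf_prefix_eq (w w' : word) : leafb w -> w' \in S -> prefix w w' -> w' = w.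
Proof.
case/and3P=> _ n0 n1 w'S /prefixP[[|c s] ew']; first by rewrite ew' cats0.
have : rcons w c \in S.
  by apply: (S_closed w'S); apply/prefixP; exists s; rewrite ew' cat_rcons.
by case: c {ew'}; rewrite ?(negbTE n0) ?(negbTE n1).
Qed.

Lemma leaf_above_Some (w z : word) :
  leaf_above z = Some w -> [/\ leafb w, prefix w z & size w < size z].
Proof.
rewrite /leaf_above; case E: [seq _ <- S | _] => [|h l] //= [<-].
have : h \in [seq w <- S | [&& leafb w, prefix w z & size w < size z]].
  by rewrite E mem_head.
by rewrite mem_filter => /andP[/and3P].
Qed.

Lemma leaf_above_eq (w z : word) :
  leafb w -> prefix w z -> size w < size z -> leaf_above z = Some w.
Proof.
move=> lw pwz swz; case E: (leaf_above z) => [w'|]; last first.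
  have : w \in [seq w <- S | [&& leafb w, prefix w z & size w < size z]].
    by rewrite mem_filter lw pwz swz; case/and3P: lw.
  by move: E; rewrite /leaf_above; case: [seq _ <- S | _].
have [lw' pw'z _] := leaf_above_Some E; congr Some.
case: (leqP (size w') (size w)) => hs.
  apply/esym/(leaf_prefix_eq lw'); first by case/and3P: lw.
  exact: prefix_comparable pw'z pwz hs.
by apply: leaf_prefix_eq lw _ (prefix_comparable pwz pw'z (ltnW hs)); case/and3P: lw'.
Qed.

Lemma leaf_above_in (y : word) : y \in S -> leaf_above y = None.
Proof.
move=> yS; case E: (leaf_above y) => [w|] //.
have [lw pwy swy] := leaf_above_Some E.
by move: swy; rewrite (leaf_prefix_eq lw yS pwy) ltnn.
Qed.

Lemma leaf_above_rcons (z : word) (c : bool) :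
  leaf_above (rcons z c) = if leafb z then Some z else leaf_above z.
Proof.
case lz: (leafb z).
  by apply: leaf_above_eq; [|exact: prefix_rcons|rewrite size_rcons].
congr ohead; apply: eq_filter => w; rewrite size_rcons ltnS.
case: (ltngtP (size w) (size z)) => hs.
- by rewrite prefix_rcons_small // ltnW.
- by rewrite !andbF.
rewrite !andbT andbF prefix_rcons_small ?hs // prefixE hs take_size.
by case: (z =P w) => [<-|]; rewrite ?lz ?andbF.
Qed.

Definition graft (s g : tree) : tree :=
  fun z => if leaf_above z is Some w then g (drop (size w) z) else s z.

Lemma graft_in (s g : tree) (y : word) : y \in S -> graft s g y = s y.
Proof. by move=> yS; rewrite /graft leaf_above_in. Qed.

Lemma graft_below (s g : tree) (w r : word) :
  leafb w -> r != [::] -> graft s g (w ++ r) = g r.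
Proof.
move=> lw r0; rewrite /graft (leaf_above_eq lw (prefix_prefix w r)) ?drop_size_cat //.
by rewrite size_cat -[X in X < _]addn0 ltn_add2l lt0n size_eq0.
Qed.

(* The only new parent-children triples are at the leaves of [S], where the
   children carry [g [:: false]] and [g [:: true]]. *)
Lemma graft_XF (s g : tree) :
  XF s -> XF g -> g [:: false] != g [:: true] -> XF (graft s g).
Proof.
move=> Xs Xg g01 z; rewrite /graft !leaf_above_rcons.
case: (leafb z).
  rewrite -!cats1 !drop_size_cat // => -[h0 h1].
  by move: g01; rewrite -h0 -h1 eqxx.
case E: (leaf_above z) => [w|]; last exact: Xs.
have [_ pwz _] := leaf_above_Some E.
by rewrite !drop_rcons ?size_prefix //; apply: Xg.
Qed.

End Graft.

Definition code_P : seq word := [:: [:: false]; [:: true; false]; [:: true; true]].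

Lemma code_P_CPC : is_CPC code_P.
Proof.
rewrite /code_P; split; first by [].
split; first by move=> x y; rewrite !inE => /or3P[]/eqP-> /or3P[]/eqP->.
move=> x; rewrite !big_cons big_nil; case: x => [|[] [|[] x]] //= _.
- by exists [:: true; true]; rewrite ?inE ?prefix0s.
- by exists [:: true; false]; rewrite ?inE ?prefix0s.
- by exists [:: false]; rewrite ?inE ?prefix0s.
- by exists [:: false]; rewrite ?inE ?prefix0s.
Qed.

(* The tree placed below a leaf: a copy of [s] below each word of [code_P],
   and the value opposite to [s [::]] at the node 1; the value at the root is
   never used. *)
Definition patch (s : tree) : tree :=
  fun r => match r with
           | [:: true] => ~~ s [::]
           | false :: y | true :: _ :: y => s y
           | [::] => s [::]
           end.

Lemma XF_patch (s : tree) : XF s -> XF (patch s).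
Proof.
move=> Xs [|[] [|b y]] /=; try exact: Xs.
- by case: (s [::]) => -[].
- by case: (s [::]) => -[].
Qed.

Lemma patch_top (s : tree) : patch s [:: false] != patch s [:: true].
Proof. by rewrite /patch; case: (s [::]). Qed.

Lemma patch_code (s : tree) (x y : word) : x \in code_P -> patch s (x ++ y) = s y.
Proof. by rewrite /code_P !inE => /or3P[]/eqP->. Qed.

Lemma XF_strongly_irreducible : strongly_irreducible XF code_P.
Proof.
split; first exact: code_P_CPC.
move=> Su u Sv v [Su_closed [su [Xsu [wu Ou]]]] [_ [sv [Xsv [wv Ov]]]].
exists (graft Su (fun z => su (wu ++ z)) (patch (fun z => sv (wv ++ z)))).
have Xglued := graft_XF Su_closed (XF_shift (w := wu) Xsu)
  (XF_patch (XF_shift (w := wv) Xsv)) (patch_top _).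
split; first exact: Xglued.
split; first by move=> y yS; rewrite graft_in //; apply: Ou.
move=> w [wS [n0 n1]] x xP y yS.
rewrite -catA graft_below //; first by rewrite patch_code //; apply: Ov.
  by rewrite /leafb wS n0 n1.
by move: xP; rewrite /code_P !inE => /or3P[]/eqP->.
Qed.

Lemma XF_level_parity (t : tree) (k : nat) (b : bool) : XF t ->
  (forall z, size z = k -> t z = b) ->
  forall m z, size z + m = k -> t z = b (+) odd m.
Proof.
move=> Xt tk; elim=> [|m IH] z hz; first by rewrite addbF tk // -hz addn0.
rewrite /= addbN; apply: XF_parent Xt _ _; apply: IH; by rewrite size_rcons addSnnS.
Qed.

Lemma XF_alternating (b : bool) : XF (fun z => b (+) odd (size z)).
Proof. by move=> z; rewrite !size_rcons /=; case: b; case: (odd _) => -[]. Qed.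

Lemma in_B_root (b : bool) : in_B XF 1 (fun _ => b).
Proof.
exists (fun z => b (+) odd (size z)); split; first exact: XF_alternating.
by move=> y; rewrite inE => /eqP -> /=; rewrite addbF.
Qed.

Lemma mem_words (k : nat) (x : word) : size x = k -> x \in words k.
Proof.
elim: k x => [|k IH] [|b x] //= [e].
rewrite mem_cat cats0; case: b; apply/orP; [right|left]; apply: map_f; exact: IH.
Qed.

Lemma XF_not_uniformly_block_gluing : ~ uniformly_block_gluing XF.
Proof.
move=> [k [_ glue]].
have [t [Xt [Ot Ov]]] :=
  glue 1 isT (fun _ => ~~ odd k) (fun _ => false) (in_B_root _) (in_B_root _).
have root_leaf : leaf (Sigma_upto 0) [::] by [].
have t_level z : size z = k -> t z = false.
  by move=> hz; have := Ov [::] root_leaf z (mem_words hz) [::]; rewrite cats0; apply.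
have := XF_level_parity Xt t_level (z := [::]) (add0n k).
by rewrite (Ot [::]) //; case: (odd k).
Qed.

Theorem mainTheorem9 :
  strongly_irreducible XF [:: [:: false]; [:: true; false]; [:: true; true]]
  /\ ~ uniformly_block_gluing XF.
Proof. exact: (conj XF_strongly_irreducible XF_not_uniformly_block_gluing). Qed.
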